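(* Assume $b$ satisfies condition (Cb) for some $\rho\in\mathscr U$ and let $\ell\in\mathbb S^d$. Let $\phi$ be a nonnegative $C^\infty$ function on $\mathbb R^d$ supported in the unit ball with $\int\phi=1$, $\phi_\varepsilon(x):=\varepsilon^{-d}\phi(x/\varepsilon)$, and $b_\varepsilon:=b*\phi_\varepsilon$ for $\varepsilon\in(0,1)$. Then each $b_\varepsilon$ satisfies (Cb) with the same $\rho$, and if $X^\varepsilon_t$ and $X^\ell_t$ solve $X^\varepsilon_t=x_0+\int_0^tb_\varepsilon(X^\varepsilon_s)ds+W_{\ell(t)}$ and $X^\ell_t=x_0+\int_0^tb(X^\ell_s)ds+W_{\ell(t)}$ (driven by the same $W$), then for every $\omega$ and every $t\ge0$, $\lim_{\varepsilon\downarrow0}|X^\varepsilon_t(\omega)-X^\ell_t(\omega)|=0$.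
   Context: Notation: $\|x\|_1:=\sum_j|x_j|$. $\mathscr U$ is the set of continuous non-decreasing functions $\rho:(0,\infty)\to(0,\infty)$ with at most linear growth such that $\int_{0+}\frac{1}{\rho(s)}\,ds=+\infty$. Condition (Cb): $b:\mathbb R^d\to\mathbb R^d$ is continuous and $(x_j-y_j)(b_j(x)-b_j(y))\le|x_j-y_j|\rho(\|x-y\|_1)$ for all $x,y\in\mathbb R^d$, $j=1,\dots,d$. $\mathbb S^d$ is the set of càdlàg $\ell=(\ell_1,\dots,\ell_d):[0,\infty)\to[0,\infty)^d$ with each $\ell_j$ non-decreasing and $\ell_j(0)=0$. $W$ is a standard $d$-dimensional Brownian motion and $W_{\ell(t)}:=(W^1_{\ell_1(t)},\dots,W^d_{\ell_d(t)})$. *)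

From Stdlib Require Import Reals ClassicalEpsilon.
From mathcomp Require Import ssreflect ssrbool eqtype ssrnat seq fintype bigop.
Set Implicit Arguments. Unset Strict Implicit.
Open Scope R_scope.

Definition pt (d : nat) := 'I_d -> R.

Definition vsub d (x y : pt d) : pt d := fun j => x j - y j.

Definition norm1 d (x : pt d) : R := \big[Rplus/0]_(j < d) Rabs (x j).
Definition norm2 d (x : pt d) : R := sqrt (\big[Rplus/0]_(j < d) (x j * x j)).

Definition upd d (x : pt d) (j : 'I_d) (t : R) : pt d :=
  fun i => if i == j then t else x i.

(* total version of the Riemann integral: the value of RiemannInt whenever
   f is Riemann integrable on [a,b] (default 0 otherwise) *)
Definition RI (f : R -> R) (a b : R) : R :=
  epsilon (inhabits 0) (fun v => exists pr : Riemann_integrable f a b, RiemannInt pr = v).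

Fixpoint iint d (js : seq 'I_d) (f : pt d -> R) (x : pt d) : R :=
  match js with
  | [::] => f x
  | j :: js' => RI (fun t => iint js' f (upd x j t)) (-1) 1
  end.

(* integral of f over the box [-1,1]^d (this equals the integral over R^d
   for the continuous functions supported in the closed unit ball used below) *)
Definition box_int d (f : pt d -> R) : R := iint (enum 'I_d) f (fun _ => 0).

Definition contR d (f : pt d -> R) : Prop :=
  forall x eps, 0 < eps -> exists del, 0 < del /\
    forall y, norm1 (vsub y x) < del -> Rabs (f y - f x) < eps.

Fixpoint Ck d (k : nat) (f : pt d -> R) : Prop :=
  contR f /\
  match k with
  | O => True
  | S k' => forall j : 'I_d, exists g : pt d -> R,
      (forall x, derivable_pt_lim (fun t => f (upd x j t)) (x j) (g x)) /\ Ck k' g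
  end.

Definition smooth d (f : pt d -> R) : Prop := forall k, Ck k f.

Definition class_U (rho : R -> R) : Prop :=
  (forall s, 0 < s -> 0 < rho s) /\
  (forall s, 0 < s -> continuity_pt rho s) /\
  (forall s t, 0 < s -> s <= t -> rho s <= rho t) /\
  (exists C, forall s, 0 < s -> rho s <= C * (1 + s)) /\
  (* int_{0+} 1/rho = +infinity *)
  (forall M, exists d0, 0 < d0 < 1 /\
     forall del, 0 < del <= d0 -> M <= RI (fun s => / rho s) del 1).

Definition Cb d (rho : R -> R) (b : pt d -> pt d) : Prop :=
  (forall j, contR (fun x => b x j)) /\
  (forall (x y : pt d) (j : 'I_d),
     (x j - y j) * (b x j - b y j) <= Rabs (x j - y j) * rho (norm1 (vsub x y))).

Definition in_Sd d (ell : 'I_d -> R -> R) : Prop :=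
  forall j : 'I_d,
    ell j 0 = 0 /\
    (forall s t, 0 <= s -> s <= t -> ell j s <= ell j t) /\
    (forall t, 0 <= t -> forall eps, 0 < eps -> exists del, 0 < del /\
        forall s, t <= s < t + del -> Rabs (ell j s - ell j t) < eps) /\
    (forall t, 0 < t -> exists L, forall eps, 0 < eps -> exists del, 0 < del /\
        forall s, t - del < s < t -> Rabs (ell j s - L) < eps).

(* a (sample) path of d-dim Brownian motion: continuous on [0,oo), started at 0 *)
Definition bm_path d (w : 'I_d -> R -> R) : Prop :=
  forall j : 'I_d,
    w j 0 = 0 /\
    (forall t, 0 <= t -> forall eps, 0 < eps -> exists del, 0 < del /\
        forall s, 0 <= s -> Rabs (s - t) < del -> Rabs (w j s - w j t) < eps).

Definition mollifier d (phi : pt d -> R) : Prop :=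
  smooth phi /\ (forall x, 0 <= phi x) /\
  (forall x, phi x <> 0 -> norm2 x <= 1) /\ box_int phi = 1.

Definition phi_eps d (phi : pt d -> R) (eps : R) (x : pt d) : R :=
  / (eps ^ d) * phi (fun j => x j / eps).

Definition b_eps d (phi : pt d -> R) (b : pt d -> pt d) (eps : R) : pt d -> pt d :=
  fun x j => box_int (fun y => b (vsub x y) j * phi_eps phi eps y).

Definition solves d (b : pt d -> pt d) (x0 : pt d) (w : 'I_d -> R -> R)
    (ell : 'I_d -> R -> R) (X : R -> pt d) : Prop :=
  forall t, 0 <= t -> forall j : 'I_d,
    exists pr : Riemann_integrable (fun s => b (X s) j) 0 t,
      X t j = x0 j + RiemannInt pr + w j (ell j t).

(* Part 1.  b_eps x - b_eps y is the average of b(x - z) - b(y - z) against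
   the probability density phi_eps, supported in [-eps, eps]^d.  The box
   integral is linear and monotone and phi_eps has mass 1, so the one-sided
   bound of (Cb), being linear in b(x) - b(y), passes to b_eps; continuity
   of b_eps comes from the uniform continuity of b on bounded sets.

   Part 2.  b_eps -> b uniformly on bounded sets.  For two solutions driven
   by the same noise, the noise cancels in Z = X^eps - X, so u = ||Z||_1 is
   Lipschitz with u 0 = 0.  Coordinatewise, where Z_j > 0 (resp. < 0) the
   drift difference is at most rho(u) + del (resp. at least its opposite),
   hence u c - u a <= D (c - a) (rho m + del) whenever u <= m on [a, c].
   An Osgood-Bihari argument, based on int_{0+} 1/rho = +oo, turns this
   differential inequality into u < eta on [0, t] once del is small. *)

From Stdlib Require Import Reals Lra ClassicalEpsilon Classical FunctionalExtensionality.
From mathcomp Require Import ssreflect ssrfun ssrbool eqtype ssrnat seq fintype bigop.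
From Coquelicot Require Import Coquelicot.
From HB Require Import structures.
Open Scope R_scope.
Set Implicit Arguments. Unset Strict Implicit.

Lemma Rplus_assoc_law : ssrfun.associative Rplus.
Proof. by move=> a b c; rewrite Rplus_assoc. Qed.
Lemma Rplus_comm_law : ssrfun.commutative Rplus.
Proof. move=> a b; exact: Rplus_comm. Qed.
Lemma Rplus_0_l_law : ssrfun.left_id 0 Rplus.
Proof. move=> a; exact: Rplus_0_l. Qed.
#[warnings="-HB.no-new-instance"]
HB.instance Definition _ :=
  Monoid.isComLaw.Build R 0 Rplus Rplus_assoc_law Rplus_comm_law Rplus_0_l_law.

Lemma big_Rle (I : finType) (f g : I -> R) :
  (forall j, f j <= g j) -> \big[Rplus/0]_(j : I) f j <= \big[Rplus/0]_(j : I) g j.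
Proof.
move=> H; apply: (big_ind2 (fun a b => a <= b)) => [|????|i _]; [lra | lra | exact: H].
Qed.

Lemma big_Rconst d (c : R) : \big[Rplus/0]_(j < d) c = INR d * c.
Proof.
elim: d => [|d IH]; first by rewrite big_ord0 /=; lra.
rewrite big_ord_recr IH S_INR /=; lra.
Qed.

Lemma big_Rscal (I : finType) (c : R) (f : I -> R) :
  \big[Rplus/0]_(j : I) (c * f j) = c * \big[Rplus/0]_(j : I) f j.
Proof. by symmetry; apply: (big_morph (fun v => c * v)) => [a b|]; lra. Qed.

Lemma big_Rterm (I : finType) (f : I -> R) (j : I) :
  (forall i, 0 <= f i) -> f j <= \big[Rplus/0]_(i : I) f i.
Proof.
move=> H; rewrite (bigD1 j) //=.
suff : 0 <= \big[Rplus/0]_(i | i != j) f i by lra.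
by apply: (big_ind (fun a => 0 <= a)) => [|???|i _]; [lra | lra | exact: H].
Qed.

Lemma norm1_ext d (x y : pt d) : (forall j, x j = y j) -> norm1 x = norm1 y.
Proof. by move=> H; apply: eq_bigr => i _; rewrite H. Qed.

Lemma coord_le_norm1 d (x : pt d) j : Rabs (x j) <= norm1 x.
Proof. apply: (@big_Rterm _ (fun i => Rabs (x i))) => i; exact: Rabs_pos. Qed.

Lemma norm1_ge0 d (x : pt d) : 0 <= norm1 x.
Proof.
by apply: (big_ind (fun a => 0 <= a)) => [|???|i _]; [lra | lra | exact: Rabs_pos].
Qed.

Lemma norm1_bound d (x : pt d) M : (forall j, Rabs (x j) <= M) -> norm1 x <= INR d * M.
Proof. by move=> H; rewrite -big_Rconst; apply: big_Rle. Qed.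

Lemma norm1_triangle d (x y : pt d) : norm1 (fun j => x j + y j) <= norm1 x + norm1 y.
Proof. rewrite /norm1 -big_split /=; apply: big_Rle => j; exact: Rabs_triang. Qed.

Lemma norm1_sym d (x y : pt d) : norm1 (vsub x y) = norm1 (vsub y x).
Proof. apply: eq_bigr => j _; exact: Rabs_minus_sym. Qed.

Lemma norm1_dist_tri d (x y z : pt d) :
  norm1 (vsub x z) <= norm1 (vsub x y) + norm1 (vsub y z).
Proof.
rewrite (@norm1_ext _ (vsub x z) (fun j => vsub x y j + vsub y z j)).
  exact: norm1_triangle.
by move=> j; rewrite /vsub; ring.
Qed.

Lemma norm1_le_dist d (x y : pt d) : norm1 x <= norm1 y + norm1 (vsub x y).
Proof.
rewrite (@norm1_ext _ x (fun j => y j + vsub x y j)); first exact: norm1_triangle.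
by move=> j; rewrite /vsub; ring.
Qed.

Lemma norm1_dist_le d (x y : pt d) : norm1 (vsub x y) <= norm1 x + norm1 y.
Proof.
have -> : norm1 y = norm1 (fun j => - y j) by apply: eq_bigr => j _; rewrite Rabs_Ropp.
rewrite (@norm1_ext _ _ (fun j => x j + - y j)) //; exact: norm1_triangle.
Qed.

Lemma norm1_reverse_tri d (x y : pt d) : Rabs (norm1 x - norm1 y) <= norm1 (vsub x y).
Proof.
have := norm1_le_dist y x; have := norm1_le_dist x y; rewrite norm1_sym.
move=> *; apply: Rabs_le; lra.
Qed.

Lemma norm1_shift d (x y z : pt d) : norm1 (vsub (vsub x z) (vsub y z)) = norm1 (vsub x y).
Proof. by apply: norm1_ext => i; rewrite /vsub; ring. Qed.

Lemma norm1_zero d : norm1 (fun _ : 'I_d => 0) = 0.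
Proof. by rewrite /norm1 big1 // => i _; exact: Rabs_R0. Qed.

Lemma norm1_upd_dist d (x : pt d) j t s :
  norm1 (vsub (upd x j t) (upd x j s)) = Rabs (t - s).
Proof.
rewrite /norm1 (bigD1 j) //= big1 /vsub /upd ?eqxx; first lra.
by move=> i /negbTE ->; rewrite Rminus_eq_0; exact: Rabs_R0.
Qed.

Lemma norm1_upd_same d (x y : pt d) j t :
  norm1 (vsub (upd x j t) (upd y j t)) <= norm1 (vsub x y).
Proof.
apply: big_Rle => i; rewrite /vsub /upd; case: (i == j); last lra.
rewrite Rminus_eq_0 Rabs_R0; exact: Rabs_pos.
Qed.

Lemma norm1_upd_le d (x : pt d) j t : norm1 (upd x j t) <= norm1 x + Rabs t.
Proof.
rewrite /norm1 (bigD1 j) //= [X in _ <= X + _](bigD1 j) //= /upd eqxx.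
rewrite (eq_bigr (fun i => Rabs (x i))) => [|i /negbTE -> //].
have := Rabs_pos (x j); lra.
Qed.

Lemma coord_le_norm2 d (x : pt d) j : Rabs (x j) <= norm2 x.
Proof.
rewrite /norm2 -sqrt_Rsqr_abs; apply: sqrt_le_1_alt.
rewrite /Rsqr; apply: (@big_Rterm _ (fun i => x i * x i)) => i; exact: Rle_0_sqr.
Qed.

Lemma norm2_le_norm1 d (x : pt d) : norm2 x <= norm1 x.
Proof.
rewrite /norm2 -(sqrt_Rsqr (norm1 x)); last exact: norm1_ge0.
apply: sqrt_le_1_alt; rewrite /Rsqr {2}/norm1 -big_Rscal; apply: big_Rle => j.
have := coord_le_norm1 x j; have := Rabs_pos (x j).
have := Rsqr_abs (x j); rewrite /Rsqr; nra.
Qed.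

Lemma coordinate_choice d (A : Type) (a0 : A) (join : A -> A -> A)
    (P : 'I_d -> A -> Prop) :
  (forall j a b, P j a -> P j (join a b)) -> (forall j a b, P j b -> P j (join a b)) ->
  (forall j, exists a, P j a) -> exists a, forall j, P j a.
Proof.
move=> Hl Hr H.
suff /(_ (enum 'I_d)) [a Ha] : forall s : seq 'I_d, exists a, forall j, j \in s -> P j a.
  by exists a => j; apply: Ha; rewrite mem_enum.
elim=> [|j s [a Ha]]; first by exists a0.
case: (H j) => c Hc; exists (join c a) => i.
rewrite in_cons => /orP [/eqP -> | Hi]; [exact: Hl | exact: Hr (Ha i Hi)].
Qed.

Lemma choice_threshold d (P : 'I_d -> nat -> Prop) :
  (forall j, exists N, forall n, (N <= n)%N -> P j n) ->
  exists N, forall j n, (N <= n)%N -> P j n.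
Proof.
apply: (@coordinate_choice d nat 0%N maxn (fun j N => forall n, (N <= n)%N -> P j n))
  => j a b H n Hn; apply: H; apply: leq_trans Hn; [exact: leq_maxl | exact: leq_maxr].
Qed.

Lemma choice_bound d (P : 'I_d -> R -> Prop) :
  (forall j M M', M <= M' -> P j M -> P j M') ->
  (forall j, exists M, P j M) -> exists M, forall j, P j M.
Proof.
move=> Hm; apply: (@coordinate_choice d R 0 Rmax P) => j a b;
  apply: Hm; [exact: Rmax_l | exact: Rmax_r].
Qed.

Lemma choice_radius d (P : 'I_d -> R -> Prop) :
  (forall j e e', 0 < e' <= e -> P j e -> P j e') ->
  (forall j, exists e, 0 < e /\ P j e) -> exists e, 0 < e /\ forall j, P j e.
Proof.
move=> Hm H.
have [e He] : exists e : posreal, forall j, P j e.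
  apply: (@coordinate_choice d posreal (mkposreal _ Rlt_0_1)
            (fun a b => mkposreal _ (Rmin_stable_in_posreal a b)) (fun j e => P j e)) => /=.
  - move=> j a b; apply: Hm; split; [exact: Rmin_stable_in_posreal | exact: Rmin_l].
  - move=> j a b; apply: Hm; split; [exact: Rmin_stable_in_posreal | exact: Rmin_r].
  - by move=> j; case: (H j) => e [He Pe]; exists (mkposreal _ He).
by exists e; split; [exact: cond_pos | exact: He].
Qed.

Lemma contR_const d (c : R) : contR (fun _ : pt d => c).
Proof.
move=> x e He; exists 1; split=> [|y _]; last rewrite Rminus_eq_0 Rabs_R0; lra.
Qed.

Lemma contR_plus d (f g : pt d -> R) : contR f -> contR g -> contR (fun x => f x + g x).
Proof.
move=> Hf Hg x e He.
case: (Hf x (e/2)) => [|d1 [Hd1 H1]]; first lra.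
case: (Hg x (e/2)) => [|d2 [Hd2 H2]]; first lra.
exists (Rmin d1 d2); split=> [|y Hy]; first exact: Rmin_pos.
have := H1 y (Rlt_le_trans _ _ _ Hy (Rmin_l _ _)).
have := H2 y (Rlt_le_trans _ _ _ Hy (Rmin_r _ _)).
have := Rabs_triang (f y - f x) (g y - g x).
rewrite (_ : f y - f x + (g y - g x) = f y + g y - (f x + g x)); [lra | ring].
Qed.

Lemma contR_opp d (f : pt d -> R) : contR f -> contR (fun x => - f x).
Proof.
move=> Hf x e He; case: (Hf x e He) => del [Hdel H]; exists del; split=> // y Hy.
by rewrite (_ : - f y - - f x = - (f y - f x)) ?Rabs_Ropp; [exact: H | ring].
Qed.

Lemma contR_minus d (f g : pt d -> R) : contR f -> contR g -> contR (fun x => f x - g x).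
Proof. by move=> Hf Hg; apply: contR_plus => //; exact: contR_opp. Qed.

Lemma contR_mult d (f g : pt d -> R) : contR f -> contR g -> contR (fun x => f x * g x).
Proof.
move=> Hf Hg x e He.
set A := Rabs (f x) + 1; set B := Rabs (g x) + 1.
have HA : 0 < A by have := Rabs_pos (f x); rewrite /A; lra.
have HB : 0 < B by have := Rabs_pos (g x); rewrite /B; lra.
case: (Hf x (Rmin 1 (e / (2 * B)))) => [|d1 [Hd1 H1]].
  by apply: Rmin_pos; [lra | apply: Rdiv_lt_0_compat; lra].
case: (Hg x (e / (2 * A))) => [|d2 [Hd2 H2]]; first by apply: Rdiv_lt_0_compat; lra.
exists (Rmin d1 d2); split=> [|y Hy]; first exact: Rmin_pos.
have F := H1 y (Rlt_le_trans _ _ _ Hy (Rmin_l _ _)).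
have G := H2 y (Rlt_le_trans _ _ _ Hy (Rmin_r _ _)).
have F1 := Rlt_le_trans _ _ _ F (Rmin_l _ _).
have F2 := Rlt_le_trans _ _ _ F (Rmin_r _ _).
have Hfy : Rabs (f y) <= A by have := Rabs_triang_inv (f y) (f x); rewrite /A; lra.
have -> : f y * g y - f x * g x = f y * (g y - g x) + g x * (f y - f x) by ring.
apply: Rle_lt_trans (Rabs_triang _ _) _; rewrite !Rabs_mult.
have E1 : A * (e / (2 * A)) = e / 2 by field; lra.
have E2 : B * (e / (2 * B)) = e / 2 by field; lra.
have Hgx : Rabs (g x) <= B by rewrite /B; lra.
have := Rabs_pos (f y); have := Rabs_pos (g y - g x); have := Rabs_pos (g x).
have := Rabs_pos (f y - f x); nra.
Qed.

Lemma contR_lipschitz_comp d (f : pt d -> R) (A : pt d -> pt d) L :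
  contR f -> 0 < L -> (forall x y, norm1 (vsub (A y) (A x)) <= L * norm1 (vsub y x)) ->
  contR (fun x => f (A x)).
Proof.
move=> Hf HL HA x e He.
case: (Hf (A x) e He) => d1 [Hd1 H1].
exists (d1 / L); split=> [|y Hy]; first exact: Rdiv_lt_0_compat.
apply: H1; apply: Rle_lt_trans (HA x y) _.
rewrite (_ : d1 = L * (d1 / L)); last by field; lra.
exact: Rmult_lt_compat_l.
Qed.

Lemma contR_reflect d (f : pt d -> R) x : contR f -> contR (fun z => f (vsub x z)).
Proof.
move=> Hf; apply: (contR_lipschitz_comp (L := 1) Hf) => [|a b]; first lra.
rewrite Rmult_1_l norm1_sym; apply: Req_le; apply: norm1_ext => j; rewrite /vsub; ring.
Qed.

Lemma continuous_of_eps_delta (g : R -> R) a :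
  (forall e, 0 < e -> exists del, 0 < del /\
     forall b, Rabs (b - a) < del -> Rabs (g b - g a) < e) ->
  continuous g a.
Proof.
move=> H; apply/filterlim_locally => eps.
case: (H eps (cond_pos eps)) => del [Hd H'].
by exists (mkposreal del Hd) => y Hy; apply: H'.
Qed.

Lemma contR_line d (f : pt d -> R) (x : pt d) j t :
  contR f -> continuous (fun s => f (upd x j s)) t.
Proof.
move=> Hf; apply: continuous_of_eps_delta => e He.
case: (Hf (upd x j t) e He) => del [Hd H].
by exists del; split=> // b Hb; apply: H; rewrite norm1_upd_dist.
Qed.

Definition extraction (phi : nat -> nat) := forall n, (phi n < phi n.+1)%N.

Lemma extraction_ge phi : extraction phi -> forall n, (n <= phi n)%N.
Proof. by move=> H; elim=> [//|n IH]; apply: leq_ltn_trans IH (H n). Qed.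

Lemma extraction_comp phi psi :
  extraction phi -> extraction psi -> extraction (fun n => phi (psi n)).
Proof.
move=> H1 H2 n; have := H2 n; move: (psi n) (psi n.+1) => a.
elim=> [//|b IH]; rewrite ltnS leq_eqVlt => /orP [/eqP <- | Hab]; first exact: H1.
exact: ltn_trans (IH Hab) (H1 b).
Qed.

Lemma inv_succ_small e : 0 < e -> exists N : nat, forall n, (N <= n)%N -> / (INR n + 1) < e.
Proof.
move=> He; case: (archimed_cor1 e He) => N [HN HN0]; exists N => n /leP /le_INR Hn.
have := lt_0_INR _ HN0 => HNpos.
apply: Rle_lt_trans HN; apply: Rinv_le_contravar; lra.
Qed.

Lemma bolzano_weierstrass_1d (v : nat -> R) M : (forall n, Rabs (v n) <= M) ->
  exists psi l, extraction psi /\ forall e, 0 < e ->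
    exists N, forall n, (N <= n)%N -> Rabs (v (psi n) - l) < e.
Proof.
move=> Hb.
case: (Bolzano_Weierstrass v (fun c => -M <= c <= M) (compact_P3 (-M) M)).
  by move=> n; have /Rabs_le_between := Hb n.
move=> l Hl.
have H : forall N k, exists p, (N <= p)%N /\ Rabs (v p - l) < / (INR k + 1).
  move=> N k; have Hk : 0 < / (INR k + 1) by apply: Rinv_0_lt_compat; have := pos_INR k; lra.
  case: (Hl (disc l (mkposreal _ Hk)) N); first by exists (mkposreal _ Hk).
  by move=> p [/leP Hp Hv]; exists p.
pose ch N k := proj1_sig (constructive_indefinite_description _ (H N k)).
have Hch N k : (N <= ch N k)%N /\ Rabs (v (ch N k) - l) < / (INR k + 1).
  by rewrite /ch; case: constructive_indefinite_description.
pose psi := fix f n := if n is m.+1 then ch (f m).+1 m.+1 else ch 0%N 0%N.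
exists psi, l; split=> [n|e He]; first exact: (proj1 (Hch _ _)).
case: (inv_succ_small He) => N HN; exists N => n Hn.
apply: Rlt_trans (HN n Hn); case: n {Hn} => [|n]; exact: (proj2 (Hch _ _)).
Qed.

Lemma bolzano_weierstrass d (u : nat -> pt d) M : (forall n j, Rabs (u n j) <= M) ->
  exists phi (L : pt d), extraction phi /\ forall j e, 0 < e ->
    exists N, forall n, (N <= n)%N -> Rabs (u (phi n) j - L j) < e.
Proof.
move=> Hb.
suff /(_ (enum 'I_d)) [phi [L [H1 H2]]] : forall s : seq 'I_d, exists phi (L : pt d),
    extraction phi /\ forall j, j \in s -> forall e, 0 < e ->
    exists N, forall n, (N <= n)%N -> Rabs (u (phi n) j - L j) < e.
  by exists phi, L; split=> // j; apply: H2; rewrite mem_enum.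
elim=> [|j s [phi [L [Hphi IH]]]]; first by exists id, (fun _ => 0); split.
have [psi [lj [Hpsi Hc]]] := bolzano_weierstrass_1d (fun n => Hb (phi n) j).
exists (fun n => phi (psi n)), (upd L j lj); split; first exact: extraction_comp.
move=> i; rewrite in_cons /upd; case: (eqVneq i j) => [-> _ | Hij /= Hi] e He.
  by case: (Hc e He) => N HN; exists N.
case: (IH i Hi e He) => N HN; exists N => n Hn.
by apply: HN; apply: leq_trans Hn (extraction_ge Hpsi n).
Qed.

Lemma norm1_converge d (u : nat -> pt d) (L : pt d) :
  (forall j e, 0 < e -> exists N, forall n, (N <= n)%N -> Rabs (u n j - L j) < e) ->
  forall e, 0 < e -> exists N, forall n, (N <= n)%N -> norm1 (vsub (u n) L) < e.
Proof.
move=> Hu e He; have Hd : 0 < INR d + 1 by have := pos_INR d; lra.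
have [N HN] := choice_threshold
  (P := fun j n => Rabs (u n j - L j) < e / (INR d + 1))
  (fun j => Hu j _ (Rdiv_lt_0_compat _ _ He Hd)).
exists N => n Hn; apply: Rle_lt_trans (norm1_bound (M := e / (INR d + 1)) _) _.
  by move=> j; apply: Rlt_le; apply: HN.
rewrite (_ : INR d * (e / (INR d + 1)) = e * (INR d / (INR d + 1))); last by field; lra.
have : INR d / (INR d + 1) < 1 by apply/Rlt_div_l; lra.
nra.
Qed.

Lemma uniform_continuity_ball d (f : pt d -> R) : contR f -> forall M e, 0 < e ->
  exists del, 0 < del /\ forall x y, norm1 x <= M -> norm1 y <= M ->
    norm1 (vsub x y) < del -> Rabs (f x - f y) < e.
Proof.
move=> Hf M e He; apply: NNPP => Hn.
have bad n : exists xy : pt d * pt d, norm1 xy.1 <= M /\ norm1 xy.2 <= M /\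
    norm1 (vsub xy.1 xy.2) < / (INR n + 1) /\ e <= Rabs (f xy.1 - f xy.2).
  apply: NNPP => Hn2; apply: Hn; exists (/ (INR n + 1)); split.
    by apply: Rinv_0_lt_compat; have := pos_INR n; lra.
  move=> x y Hx Hy Hxy; apply: Rnot_le_lt => Hle; apply: Hn2; by exists (x, y).
pose xy n := proj1_sig (constructive_indefinite_description _ (bad n)).
have Hbad n : norm1 (xy n).1 <= M /\ norm1 (xy n).2 <= M /\
    norm1 (vsub (xy n).1 (xy n).2) < / (INR n + 1) /\ e <= Rabs (f (xy n).1 - f (xy n).2).
  by rewrite /xy; case: constructive_indefinite_description.
have [phi [L [Hphi Hc]]] : exists phi (L : pt d), extraction phi /\ forall j e, 0 < e ->
    exists N, forall n, (N <= n)%N -> Rabs ((xy (phi n)).1 j - L j) < e.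
  apply: (bolzano_weierstrass (u := fun n => (xy n).1) (M := M)) => n j.
  exact: Rle_trans (coord_le_norm1 _ j) (proj1 (Hbad n)).
case: (Hf L (e/2)) => [|del [Hdel HL]]; first lra.
case: (norm1_converge Hc (e := del / 2)) => [|N1 HN1]; first lra.
case: (inv_succ_small (e := del / 2)) => [|N2 HN2]; first lra.
pose n := maxn N1 N2; have [_ [_ [Dxy0 Gap]]] := Hbad (phi n).
set x := (xy (phi n)).1 in Dxy0 Gap *; set y := (xy (phi n)).2 in Dxy0 Gap *.
have Dx : norm1 (vsub x L) < del / 2 by apply: HN1; exact: leq_maxl.
have Dxy : norm1 (vsub x y) < del / 2.
  apply: Rlt_trans Dxy0 (HN2 _ _).
  exact: leq_trans (leq_maxr _ _) (extraction_ge Hphi n).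
have Dy : norm1 (vsub y L) < del.
  have := norm1_dist_tri y x L; rewrite (norm1_sym y x); lra.
have Dx' : norm1 (vsub x L) < del by lra.
have := HL x Dx'; have := HL y Dy; move: Gap.
have := Rabs_triang (f x - f L) (f L - f y); rewrite (Rabs_minus_sym (f L)).
rewrite (_ : f x - f L + (f L - f y) = f x - f y); [lra | ring].
Qed.

Lemma RInt_Chasles_R (f : R -> R) a b c : ex_RInt f a b -> ex_RInt f b c ->
  RInt f a b + RInt f b c = RInt f a c.
Proof. exact: RInt_Chasles. Qed.

Lemma RInt_scal_R (f : R -> R) a b c : ex_RInt f a b ->
  RInt (fun t => c * f t) a b = c * RInt f a b.
Proof. exact: RInt_scal. Qed.

Lemma RInt_minus_R (f g : R -> R) a b : ex_RInt f a b -> ex_RInt g a b ->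
  RInt f a b - RInt g a b = RInt (fun t => f t - g t) a b.
Proof. by move=> Hf Hg; rewrite (RInt_minus f g). Qed.

Lemma RInt_const_R a b c : RInt (fun _ => c) a b = (b - a) * c.
Proof. by rewrite RInt_const. Qed.

Lemma RI_RInt (f : R -> R) a b : ex_RInt f a b -> RI f a b = RInt f a b.
Proof.
move=> H; have pr := ex_RInt_Reals_0 _ _ _ H.
have Hex : exists v, exists pr : Riemann_integrable f a b, RiemannInt pr = v.
  by exists (RiemannInt pr), pr.
rewrite /RI; case: (epsilon_spec (inhabits 0) _ Hex) => pr' <-.
by rewrite (RInt_Reals _ _ _ pr').
Qed.

Lemma ex_RInt_line d (h : pt d -> R) x j a b : contR h ->
  ex_RInt (fun t => h (upd x j t)) a b.
Proof. by move=> Hh; apply: ex_RInt_continuous => z _; apply: contR_line. Qed.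

Lemma iint_cont d (f : pt d -> R) js : contR f -> contR (iint js f).
Proof.
move=> Hf; elim: js => [//|j js IH] x0 e He /=.
case: (uniform_continuity_ball IH (norm1 x0 + 2) (e := e / 4)) => [|del [Hdel H]]; first lra.
exists (Rmin del 1); split=> [|y Hy]; first by apply: Rmin_pos; lra.
have Hline z : ex_RInt (fun t => iint js f (upd z j t)) (-1) 1 by exact: ex_RInt_line.
rewrite !RI_RInt // RInt_minus_R //.
apply: Rle_lt_trans (abs_RInt_le_const _ _ _ (e / 4) _ _ _) _; first lra.
- exact: ex_RInt_minus.
- move=> t Ht; apply: Rlt_le; have Bt : Rabs t <= 1 by apply: Rabs_le; lra.
  have := norm1_le_dist y x0; have := Rmin_r del 1; have := Rmin_l del 1.
  have := norm1_upd_le y j t; have := norm1_upd_le x0 j t.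
  have := norm1_upd_same y x0 j t; move=> *; apply: H; lra.
- lra.
Qed.

Lemma iint_lin d (f g : pt d -> R) c js x : contR f -> contR g ->
  iint js (fun z => f z + c * g z) x = iint js f x + c * iint js g x.
Proof.
move=> Hf Hg; elim: js x => [//|j js IH] x /=.
have Cf := iint_cont js Hf; have Cg := iint_cont js Hg.
have -> : (fun t => iint js (fun z => f z + c * g z) (upd x j t)) =
    (fun t => plus (iint js f (upd x j t)) (scal c (iint js g (upd x j t)))).
  by apply: functional_extensionality => t; rewrite IH.
rewrite !RI_RInt; try exact: ex_RInt_line.
- by rewrite RInt_plus ?RInt_scal //; do ?apply: ex_RInt_scal; exact: ex_RInt_line.
- by apply: ex_RInt_plus; do ?apply: ex_RInt_scal; exact: ex_RInt_line.
Qed.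

Lemma iint_mono d (f g : pt d -> R) js x : contR f -> contR g ->
  (forall z, f z <= g z) -> iint js f x <= iint js g x.
Proof.
move=> Hf Hg H; elim: js x => [|j js IH] x /=; first exact: H.
have Cf := iint_cont js Hf; have Cg := iint_cont js Hg.
rewrite !RI_RInt; try exact: ex_RInt_line.
by apply: RInt_le => [|||t _]; [lra | exact: ex_RInt_line | exact: ex_RInt_line | exact: IH].
Qed.

Lemma iint_local d (f : pt d -> R) js x :
  (forall z, (forall i, i \notin js -> z i = x i) -> f z = 0) -> iint js f x = 0.
Proof.
elim: js x => [|j js IH] x H /=; first by apply: H.
have -> : (fun t => iint js f (upd x j t)) = (fun _ => 0).
  apply: functional_extensionality => t; apply: IH => z Hz; apply: H => i.
  rewrite in_cons negb_or => /andP [Hij Hi]; by rewrite Hz // /upd (negbTE Hij).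
by rewrite RI_RInt ?RInt_const_R; [ring | exact: ex_RInt_const].
Qed.

Lemma RInt_rescale (G : R -> R) eps : 0 < eps <= 1 -> (forall t, continuous G t) ->
  (forall s, 1 < Rabs s -> G s = 0) ->
  RInt (fun t => G (t / eps)) (-1) 1 = eps * RInt G (-1) 1.
Proof.
move=> Heps CG HG0.
have exG a b : ex_RInt G a b by apply: ex_RInt_continuous.
have Hinv : 1 <= / eps by rewrite -Rinv_1; apply: Rinv_le_contravar; lra.
have Hc := RInt_comp_lin G (/ eps) 0 (-1) 1 (exG _ _).
have E1 : / eps * -1 + 0 = - / eps by ring.
have E2 : / eps * 1 + 0 = / eps by ring.
rewrite E1 E2 in Hc.
have <- : RInt G (- / eps) (/ eps) = RInt G (-1) 1.
  rewrite -(RInt_Chasles_R (b := -1)) // -(RInt_Chasles_R (a := -1) (b := 1)) //.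
  rewrite (RInt_ext G (fun _ => 0) (- / eps) (-1)) => [|t].
    rewrite (RInt_ext G (fun _ => 0) 1 (/ eps)) => [|t].
      by rewrite !RInt_const_R !Rmult_0_r Rplus_0_l Rplus_0_r.
    by rewrite Rmin_left ?Rmax_right; try lra; move=> Ht; apply: HG0; rewrite Rabs_pos_eq; lra.
  by rewrite Rmin_left ?Rmax_right; try lra; move=> Ht; apply: HG0; rewrite Rabs_left; lra.
rewrite -Hc -RInt_scal_R.
  apply: RInt_ext => t _; rewrite /scal /= /mult /=.
  rewrite (_ : / eps * t + 0 = t / eps); [field; lra | rewrite /Rdiv; ring].
apply: ex_RInt_continuous => z _.
apply: (continuous_scal (fun _ => / eps)); first exact: continuous_const.
apply: (continuous_comp (fun y => / eps * y + 0)) => //.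
by apply: ex_derive_continuous; auto_derive.
Qed.

Lemma iint_rescale d (phi : pt d -> R) (eps : R) : contR phi -> 0 < eps <= 1 ->
  (forall z j, 1 < Rabs (z j) -> phi z = 0) -> forall js x, uniq js ->
  iint js (fun y => phi (fun i => y i / eps)) x
    = eps ^ (size js) * iint js phi (fun i => x i / eps).
Proof.
move=> Hphi Heps Hsupp; elim=> [|j js IH] x /=; first by move=> _; ring.
case/andP=> Hj Hu; set x' := fun i => x i / eps.
pose G s := iint js phi (upd x' j s).
have CG t : continuous G t by apply: contR_line; exact: iint_cont.
have -> : (fun t => iint js (fun y => phi (fun i => y i / eps)) (upd x j t)) =
          (fun t => eps ^ size js * G (t / eps)).
  apply: functional_extensionality => t; rewrite IH //; congr (_ * iint _ _ _).
  by apply: functional_extensionality => i; rewrite /upd /x'; case: (i == j).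
have exG a b : ex_RInt G a b by apply: ex_RInt_continuous.
have exGs a b : ex_RInt (fun t => G (t / eps)) a b.
  apply: ex_RInt_continuous => z _; apply: (continuous_comp (fun t => t / eps)) => //.
  by apply: ex_derive_continuous; auto_derive.
have G0 s : 1 < Rabs s -> G s = 0.
  move=> Hs; apply: iint_local => z Hz; apply: (Hsupp z j).
  by rewrite (Hz j Hj) /upd eqxx.
rewrite !RI_RInt //; last by apply: ex_RInt_scal.
by rewrite RInt_scal_R // RInt_rescale //= -/G; ring.
Qed.

Section Mollifier.
Variables (d : nat) (phi : pt d -> R).
Hypothesis Hphi : mollifier phi.

Lemma phi_cont : contR phi.
Proof. by case: Hphi => /(_ 0%N) []. Qed.

Lemma phi_supp z j : 1 < Rabs (z j) -> phi z = 0.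
Proof.
move=> H; apply: NNPP => Hn; case: Hphi => _ [_ [Hs _]].
have := Hs z Hn; have := coord_le_norm2 z j; lra.
Qed.

Lemma box_lin (f g : pt d -> R) c : contR f -> contR g ->
  box_int (fun z => f z + c * g z) = box_int f + c * box_int g.
Proof. exact: iint_lin. Qed.

Lemma box_mono (f g : pt d -> R) : contR f -> contR g -> (forall z, f z <= g z) ->
  box_int f <= box_int g.
Proof. exact: iint_mono. Qed.

Lemma box_zero : box_int (fun _ : pt d => 0) = 0.
Proof. exact: iint_local. Qed.

Lemma box_scal (g : pt d -> R) c : contR g -> box_int (fun z => c * g z) = c * box_int g.
Proof.
move=> Hg; rewrite -[RHS]Rplus_0_l -box_zero -box_lin //; last exact: contR_const.
by congr box_int; apply: functional_extensionality => z; ring.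
Qed.

Variable eps : R.
Hypothesis Heps : 0 < eps < 1.

Lemma phi_scaled_cont : contR (fun x => phi (fun j => x j / eps)).
Proof.
apply: (contR_lipschitz_comp (L := / eps) phi_cont); first by apply: Rinv_0_lt_compat; lra.
move=> x y; rewrite -big_Rscal; apply: Req_le; apply: eq_bigr => j _.
rewrite /vsub (_ : y j / eps - x j / eps = / eps * (y j - x j)); last by rewrite /Rdiv; ring.
by rewrite Rabs_mult Rabs_pos_eq //; apply: Rlt_le; apply: Rinv_0_lt_compat; lra.
Qed.

Lemma phi_eps_cont : contR (phi_eps phi eps).
Proof. apply: contR_mult; [exact: contR_const | exact: phi_scaled_cont]. Qed.

Lemma phi_eps_ge0 z : 0 <= phi_eps phi eps z.
Proof.
apply: Rmult_le_pos; last by case: Hphi => _ [].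
by apply: Rlt_le; apply: Rinv_0_lt_compat; apply: pow_lt; lra.
Qed.

Lemma phi_eps_supp z : phi_eps phi eps z <> 0 -> forall j, Rabs (z j) <= eps.
Proof.
move=> H j; apply: Rnot_lt_le => Hlt; apply: H.
rewrite /phi_eps (@phi_supp _ j); first ring.
rewrite Rabs_div; last lra.
by rewrite (Rabs_pos_eq eps); [apply/Rlt_div_r; lra | lra].
Qed.

Lemma phi_eps_supp_norm1 z : phi_eps phi eps z <> 0 -> norm1 z <= INR d * eps.
Proof. by move=> Hz; apply: norm1_bound; exact: phi_eps_supp. Qed.

Lemma phi_eps_mass : box_int (phi_eps phi eps) = 1.
Proof.
have Hd := pow_lt eps d (proj1 Heps).
rewrite /phi_eps box_scal; last exact: phi_scaled_cont.
rewrite /box_int iint_rescale ?size_enum_ord; [|exact: phi_cont | lra | exact: phi_supp |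
  exact: enum_uniq].
have -> : (fun i : 'I_d => 0 / eps) = (fun _ => 0).
  by apply: functional_extensionality => i; rewrite /Rdiv Rmult_0_l.
have -> : iint (enum 'I_d) phi (fun _ => 0) = 1 by case: Hphi => _ [_ [_ H]]; exact: H.
by field; lra.
Qed.

Notation average F := (box_int (fun z => F z * phi_eps phi eps z)).

Lemma average_cont (F : pt d -> R) : contR F -> contR (fun z => F z * phi_eps phi eps z).
Proof. by move=> HF; apply: contR_mult => //; exact: phi_eps_cont. Qed.

Lemma average_const c : average (fun _ => c) = c.
Proof. by rewrite box_scal ?phi_eps_mass ?Rmult_1_r //; exact: phi_eps_cont. Qed.

Lemma average_sub (F G : pt d -> R) : contR F -> contR G ->
  average F - average G = average (fun z => F z - G z).
Proof.
move=> HF HG; rewrite (_ : average F - average G = average F + -1 * average G); last ring.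
rewrite -box_lin; [|exact: average_cont | exact: average_cont].
by congr box_int; apply: functional_extensionality => z; ring.
Qed.

Lemma average_le (F : pt d -> R) c : contR F ->
  (forall z, phi_eps phi eps z <> 0 -> F z <= c) -> average F <= c.
Proof.
move=> HF H; rewrite -[X in _ <= X]average_const.
apply: box_mono => [||z]; [exact: average_cont | apply: average_cont; exact: contR_const |].
case: (Req_dec (phi_eps phi eps z) 0) => [-> | Hz]; first lra.
by apply: Rmult_le_compat_r; [exact: phi_eps_ge0 | exact: H].
Qed.

Lemma average_abs_le (F : pt d -> R) c : contR F ->
  (forall z, phi_eps phi eps z <> 0 -> Rabs (F z) <= c) -> Rabs (average F) <= c.
Proof.
move=> HF H; apply: Rabs_le; split; last first.
  by apply: average_le => // z /H /Rabs_le_between; lra.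
have CN : contR (fun z => -1 * F z) by apply: contR_mult => //; exact: contR_const.
have E : average (fun z => -1 * F z) = -1 * average F.
  rewrite -box_scal; last exact: average_cont.
  by congr box_int; apply: functional_extensionality => z; ring.
suff : average (fun z => -1 * F z) <= c by rewrite E; lra.
by apply: average_le => // z /H /Rabs_le_between; lra.
Qed.
End Mollifier.

Section MollifiedDrift.
Variables (d : nat) (rho : R -> R) (b : pt d -> pt d) (phi : pt d -> R).
Hypotheses (Hb : Cb rho b) (Hphi : mollifier phi).

Lemma b_coord_cont j : contR (fun x => b x j).
Proof. by case: Hb. Qed.

Lemma b_reflect_cont x j : contR (fun z => b (vsub x z) j).
Proof. exact: (contR_reflect (f := fun y => b y j)) (b_coord_cont j). Qed.

Variable eps : R.
Hypothesis Heps : 0 < eps < 1.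

Lemma b_eps_sub x y j : b_eps phi b eps x j - b_eps phi b eps y j =
  box_int (fun z => (b (vsub x z) j - b (vsub y z) j) * phi_eps phi eps z).
Proof. exact: (average_sub Hphi Heps (b_reflect_cont x j) (b_reflect_cont y j)). Qed.

Lemma b_eps_cont j : contR (fun x => b_eps phi b eps x j).
Proof.
move=> x e He; have Hd := pos_INR d.
case: (uniform_continuity_ball (b_coord_cont j) (norm1 x + 1 + INR d) (e := e / 2))
  => [|del [Hdel H]]; first lra.
exists (Rmin del 1); split=> [|y Hy]; first by apply: Rmin_pos; lra.
rewrite b_eps_sub; apply: Rle_lt_trans (_ : e / 2 < e); last lra.
apply: (average_abs_le Hphi Heps); first by apply: contR_minus; exact: b_reflect_cont.
move=> z /(phi_eps_supp_norm1 Hphi Heps) Hz; apply: Rlt_le; apply: H.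
- have := norm1_dist_le y z; have := norm1_le_dist y x; have := Rmin_r del 1; nra.
- have := norm1_dist_le x z; nra.
- by rewrite norm1_shift; apply: Rlt_le_trans Hy (Rmin_l _ _).
Qed.

(* The one-sided bound of (Cb) is linear in b x - b y, so it survives
   averaging against the probability density phi_eps. *)
Lemma b_eps_one_sided x y j :
  (x j - y j) * (b_eps phi b eps x j - b_eps phi b eps y j)
    <= Rabs (x j - y j) * rho (norm1 (vsub x y)).
Proof.
have CD : contR (fun z => b (vsub x z) j - b (vsub y z) j).
  by apply: contR_minus; exact: b_reflect_cont.
rewrite b_eps_sub -box_scal //; last exact: (average_cont Hphi Heps).
rewrite (_ : (fun z => _ * (_ * _)) =
    (fun z => (x j - y j) * (b (vsub x z) j - b (vsub y z) j) * phi_eps phi eps z)).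
  apply: (average_le Hphi Heps) => [|z _].
    by apply: contR_mult => //; exact: contR_const.
  have := (proj2 Hb) (vsub x z) (vsub y z) j.
  by rewrite norm1_shift /vsub (_ : x j - z j - (y j - z j) = x j - y j) //; ring.
by apply: functional_extensionality => z; ring.
Qed.

Lemma b_eps_Cb : Cb rho (b_eps phi b eps).
Proof. split; [exact: b_eps_cont | exact: b_eps_one_sided]. Qed.

End MollifiedDrift.

Lemma b_eps_uniform_conv d rho (b : pt d -> pt d) phi : Cb rho b -> mollifier phi ->
  forall M e, 0 < e -> exists del, 0 < del /\ forall eps, 0 < eps < del -> eps < 1 ->
    forall x, norm1 x <= M -> forall j, Rabs (b_eps phi b eps x j - b x j) <= e.
Proof.
move=> Hb Hphi M e He; have Hd := pos_INR d.
case: (choice_radius (P := fun j del => forall eps, 0 < eps < del ->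
    eps < 1 -> forall x, norm1 x <= M -> Rabs (b_eps phi b eps x j - b x j) <= e))
  => [j del del' Hd' H eps Heps|j|del [Hdel H]];
  [by apply: H; lra | | by exists del; split=> // eps Heps Heps1 x Hx j; exact: H].
case: (uniform_continuity_ball (b_coord_cont Hb j) (M + INR d) He) => del [Hdel H].
exists (del / (INR d + 1)); split=> [|eps Heps Heps1 x Hx]; first by apply: Rdiv_lt_0_compat; lra.
have Heps' : 0 < eps < 1 by lra.
have E : b_eps phi b eps x j - b x j =
    box_int (fun z => (b (vsub x z) j - b x j) * phi_eps phi eps z).
  rewrite -[in LHS](average_const Hphi Heps' (b x j)) /b_eps (average_sub Hphi Heps') //.
    exact: (b_reflect_cont Hb).
  exact: contR_const.
rewrite E; apply: (average_abs_le Hphi Heps') => [|z /(phi_eps_supp_norm1 Hphi Heps') Hz].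
  by apply: contR_minus; [exact: (b_reflect_cont Hb) | exact: contR_const].
have Hdeps : INR d * eps < del.
  have : (INR d + 1) * eps < del by rewrite Rmult_comm; apply/Rlt_div_r; lra.
  nra.
apply: Rlt_le; apply: H.
- have := norm1_dist_le x z; nra.
- lra.
- rewrite (@norm1_ext _ _ (fun i => - z i)) => [|i]; last by rewrite /vsub; ring.
  rewrite (_ : norm1 (fun i => - z i) = norm1 z); first lra.
  by apply: eq_bigr => i _; rewrite Rabs_Ropp.
Qed.

Lemma le_of_le_plus_eps x y : (forall k, 0 < k -> x <= y + k) -> x <= y.
Proof. by move=> H; apply: Rnot_lt_le => Hlt; have := H ((x - y) / 2); lra. Qed.

Lemma lub_approx (E : R -> Prop) m : is_lub E m -> forall k, 0 < k ->
  exists r, E r /\ m - k < r /\ r <= m.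
Proof.
move=> [Hub Hl] k Hk; apply: NNPP => Hn.
suff : m <= m - k by lra.
apply: Hl => r Er; apply: Rnot_lt_le => Hr; apply: Hn; exists r; split=> //; split=> //.
exact: Hub.
Qed.

Lemma RInt_le_const (f : R -> R) a b M : a <= b -> ex_RInt f a b ->
  (forall x, a < x < b -> f x <= M) -> RInt f a b <= (b - a) * M.
Proof.
move=> Hab Hf H; rewrite -RInt_const_R.
exact: RInt_le Hab Hf (ex_RInt_const a b M) H.
Qed.

Lemma RInt_ge_const (f : R -> R) a b M : a <= b -> ex_RInt f a b ->
  (forall x, a < x < b -> M <= f x) -> (b - a) * M <= RInt f a b.
Proof.
move=> Hab Hf H; rewrite -RInt_const_R.
exact: RInt_le Hab (ex_RInt_const a b M) Hf H.
Qed.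

Definition lipschitz_on (a c B : R) (h : R -> R) : Prop :=
  forall p q, a <= p <= c -> a <= q <= c -> Rabs (h q - h p) <= B * Rabs (q - p).

Lemma lipschitz_on_mono a c B B' h : B <= B' -> lipschitz_on a c B h -> lipschitz_on a c B' h.
Proof.
move=> HBB H p q Hp Hq; apply: Rle_trans (H p q Hp Hq) _.
by apply: Rmult_le_compat_r => //; exact: Rabs_pos.
Qed.

Lemma last_exit (h : R -> R) a c B lvl : 0 <= B -> lipschitz_on a c B h ->
  a <= c -> h a <= lvl -> lvl < h c ->
  exists m, a <= m < c /\ h m = lvl /\ forall r, m < r <= c -> lvl < h r.
Proof.
move=> HB HL Hac Ha Hc.
pose E r := a <= r <= c /\ h r <= lvl.
have bE : bound E by exists c => r [[_ ?] _].
case: (completeness E bE (ex_intro _ a (conj (conj (Rle_refl a) Hac) Ha))) => m Hm.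
have Ham : a <= m by apply: (proj1 Hm); split; [lra | done].
have Hmc : m <= c by apply: (proj2 Hm) => r [[_ ?] _].
have Habove r : m < r <= c -> lvl < h r.
  move=> Hr; apply: Rnot_le_lt => Hle.
  suff : r <= m by lra.
  by apply: (proj1 Hm); split; [lra | done].
have HkB k : 0 < k -> 0 < k / (B + 1) /\ forall v, 0 <= v <= k / (B + 1) -> B * v <= k.
  move=> Hk; split; first by apply: Rdiv_lt_0_compat; lra.
  move=> v Hv; apply: Rle_trans (_ : B * v <= (B + 1) * (k / (B + 1))) _.
    by apply: Rmult_le_compat; lra.
  by right; field; lra.
have Hlow : h m <= lvl.
  apply: le_of_le_plus_eps => k /HkB [Hk' HBk].
  case: (lub_approx Hm Hk') => r [[Hr1 Hr2] [Hr3 Hr4]].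
  have /Rabs_le_between := HL r m Hr1 (ltac:(lra)).
  rewrite (Rabs_pos_eq (m - r)); last lra.
  have := HBk (m - r) (ltac:(lra)); lra.
have Hmc' : m < c by case: (Req_dec m c) => [E'|]; [rewrite E' in Hlow; lra | lra].
exists m; split; [lra | split=> //].
apply: Rle_antisym => //; apply: le_of_le_plus_eps => k /HkB [Hk' HBk].
pose r := m + Rmin (k / (B + 1)) (c - m).
have Hr1 := Rmin_l (k / (B + 1)) (c - m); have Hr2 := Rmin_r (k / (B + 1)) (c - m).
have Hr0 : 0 < Rmin (k / (B + 1)) (c - m) by apply: Rmin_pos; lra.
have := Habove r (ltac:(rewrite /r; lra)).
have /Rabs_le_between := HL m r (ltac:(lra)) (ltac:(rewrite /r; lra)).
rewrite (Rabs_pos_eq (r - m)); last (rewrite /r; lra).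
have := HBk (r - m) (ltac:(rewrite /r; lra)); lra.
Qed.

Definition primitive_on (a c : R) (g Z : R -> R) : Prop :=
  forall p q, a <= p -> p <= q -> q <= c -> ex_RInt g p q /\ Z q - Z p = RInt g p q.

(* If g <= K wherever Z > 0, then Z grows by at most K per unit time
   while positive: after the last time m where Z m <= |Z a|, Z > 0. *)
Lemma positive_growth (Z g : R -> R) a c K B : a <= c -> 0 <= K -> 0 <= B ->
  primitive_on a c g Z -> lipschitz_on a c B Z ->
  (forall r, a <= r <= c -> 0 < Z r -> g r <= K) ->
  0 < Z c -> Z c - Rabs (Z a) <= (c - a) * K.
Proof.
move=> Hac HK HB HZ HL Hg Hc.
have [m [[Ham Hmc] [Hm Hpos]]] : exists m, (a <= m <= c) /\
    (Z m <= Rabs (Z a) /\ forall r, m < r <= c -> 0 < Z r).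
  case: (classic (exists r, a <= r <= c /\ Z r <= 0)) => [[r [Hr Hzr]] | Hnone].
    have HLr : lipschitz_on r c B Z by move=> p q Hp Hq; apply: HL; lra.
    case: (last_exit HB HLr (proj2 Hr) Hzr Hc) => m [Hm [Hzm Habove]].
    exists m; split; first lra.
    by split=> [|//]; rewrite Hzm; exact: Rabs_pos.
  exists a; split; [lra | split; first exact: Rle_abs].
  move=> r Hr; apply: Rnot_le_lt => Hz; apply: Hnone; exists r; split=> //; lra.
case: (HZ _ _ Ham Hmc (Rle_refl c)) => Hex Hint.
have : RInt g m c <= (c - m) * K.
  by apply: RInt_le_const => // x Hx; apply: Hg; [lra | apply: Hpos; lra].
have : (c - m) * K <= (c - a) * K by apply: Rmult_le_compat_r; lra.
lra.
Qed.

Lemma abs_growth (Z g : R -> R) a c K B : a <= c -> 0 <= K -> 0 <= B ->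
  primitive_on a c g Z -> lipschitz_on a c B Z -> (forall r, a <= r <= c -> 0 < Z r -> g r <= K) ->
  (forall r, a <= r <= c -> Z r < 0 -> - g r <= K) ->
  Rabs (Z c) - Rabs (Z a) <= (c - a) * K.
Proof.
move=> Hac HK HB HZ HL Hp Hn.
case: (Rtotal_order (Z c) 0) => [Hc | [Hc | Hc]]; last first.
- by rewrite (Rabs_pos_eq (Z c)); [apply: (positive_growth Hac HK HB HZ HL Hp) | ]; lra.
- rewrite Hc Rabs_R0; have := Rabs_pos (Z a); nra.
rewrite (Rabs_left (Z c)) // -(Rabs_Ropp (Z a)).
apply: (@positive_growth (fun r => - Z r) (fun r => - g r) a c K B Hac HK HB).
- move=> p q Hp1 Hpq Hq; case: (HZ _ _ Hp1 Hpq Hq) => Hex E; split.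
    exact: ex_RInt_opp.
  by rewrite (RInt_opp g) //= /opp /=; lra.
- move=> p q Hp1 Hq1; rewrite (_ : - Z q - - Z p = - (Z q - Z p)) ?Rabs_Ropp; last ring.
  exact: HL.
- by move=> r Hr Hz; apply: Hn => //; lra.
- lra.
Qed.

(* The supremum m of the points where the global bound holds satisfies it by
   continuity, and the local bound pushes past m unless m = c. *)
Lemma increment_bound_of_local (h : R -> R) a c L B : a <= c -> 0 <= B ->
  lipschitz_on a c B h ->
  (forall s, a <= s < c -> exists k0, 0 < k0 /\
     forall k, 0 < k < k0 -> s + k <= c -> h (s + k) - h s <= L * k) ->
  h c - h a <= L * (c - a).
Proof.
move=> Hac HB HL Hloc.
pose E s := a <= s <= c /\ h s - h a <= L * (s - a).
have Ea : E a by split; [lra | rewrite !Rminus_eq_0; lra].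
have bE : bound E by exists c => r [[_ ?] _].
case: (completeness E bE (ex_intro _ a Ea)) => m Hm.
have Ham : a <= m by apply: (proj1 Hm).
have Hmc : m <= c by apply: (proj2 Hm) => r [[_ ?] _].
have Em : h m - h a <= L * (m - a).
  apply: le_of_le_plus_eps => k Hk; set C := B + Rabs L + 1.
  have HC : 0 < C by have := Rabs_pos L; rewrite /C; lra.
  case: (lub_approx Hm (Rdiv_lt_0_compat _ _ Hk HC)) => r [[Hr1 Hr2] [Hr3 Hr4]].
  have /Rabs_le_between := HL r m Hr1 (ltac:(lra)).
  rewrite (Rabs_pos_eq (m - r)); last lra.
  have : C * (m - r) <= k by rewrite Rmult_comm; apply/Rle_div_r => //; lra.
  have := Rle_abs (- L); rewrite Rabs_Ropp /C.
  have := Rabs_pos L; nra.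
case: (Req_dec m c) => [<- // | Hne].
case: (Hloc m (ltac:(lra))) => k0 [Hk0 H].
pose k := Rmin (k0 / 2) (c - m).
have Hk : 0 < k by apply: Rmin_pos; lra.
have := Rmin_l (k0 / 2) (c - m); have := Rmin_r (k0 / 2) (c - m); rewrite -/k => Hk1 Hk2.
have := H k (ltac:(lra)) (ltac:(lra)) => Hinc.
suff : m + k <= m by lra.
by apply: (proj1 Hm); split; [lra | nra].
Qed.

Definition osgood_ineq (rho : R -> R) (D del t : R) (u : R -> R) : Prop :=
  forall a c m, 0 <= a -> a <= c -> c <= t -> 0 < m ->
    (forall r, a <= r <= c -> u r <= m) -> u c - u a <= D * (c - a) * (rho m + del).

Section Osgood.
Variable rho : R -> R.
Hypothesis HU : class_U rho.

Lemma rho_pos v : 0 < v -> 0 < rho v.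
Proof. by case: HU => H _; apply: H. Qed.

Lemma rho_mono v w : 0 < v -> v <= w -> rho v <= rho w.
Proof. by case: HU => _ [_ [H _]]; apply: H. Qed.

Lemma ex_RInt_inv_rho c p q : 0 <= c -> 0 < p -> 0 < q -> ex_RInt (fun v => / (rho v + c)) p q.
Proof.
move=> Hc Hp Hq; apply: ex_RInt_continuous => z [Hz _].
have Hmin : 0 < Rmin p q by apply: Rmin_pos.
have Hz0 : 0 < z by lra.
apply/continuity_pt_filterlim; apply: continuity_pt_inv; last by have := rho_pos Hz0; lra.
apply: continuity_pt_plus; last exact: continuity_pt_const.
by case: HU => _ [H _]; apply: H.
Qed.

Lemma inv_rho_shift0 : (fun v => / rho v) = (fun v => / (rho v + 0)).
Proof. by apply: functional_extensionality => v; rewrite Rplus_0_r. Qed.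

Lemma rho_near v : 0 < v -> exists th, 0 < th /\ forall w, Rabs (w - v) < th -> rho w < 2 * rho v.
Proof.
move=> Hv; have Hr := rho_pos Hv.
case: HU => _ [/(_ v Hv) Hc _]; case: (Hc (rho v) Hr) => th [Hth H].
exists th; split=> // w Hw; case: (Req_dec w v) => [-> | Hne]; first lra.
have /Rabs_def2 [H1 _] : Rabs (rho w - rho v) < rho v.
  by apply: H; split; [split=> //; exact: not_eq_sym | exact: Hw].
lra.
Qed.

(* Local form of the Osgood inequality: just after s0, u grows at rate at
   most 2 D (rho (u s0) + del), since u stays close to u s0 and rho is
   continuous there. *)
Lemma osgood_local_increment (u : R -> R) D del B t s0 s : 0 < D -> 0 <= del ->
  0 <= B -> lipschitz_on 0 t B u -> osgood_ineq rho D del t u ->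
  0 <= s0 < s -> s <= t -> 0 < u s0 ->
  exists k0, 0 < k0 /\ forall k, 0 < k < k0 -> s0 + k <= s ->
    u (s0 + k) - u s0 <= 2 * D * k * (rho (u s0) + del).
Proof.
move=> HD Hdel HB HL Hosg Hs0 Hst Hu0.
case: (rho_near Hu0) => th [Hth Hnear]; have Hr := rho_pos Hu0.
exists (th / 2 / (B + 1)); split=> [|k [Hk1 Hk2] Hk3]; first by apply: Rdiv_lt_0_compat; lra.
have HBk : B * k <= th / 2.
  apply: Rle_trans (_ : B * k <= (B + 1) * (th / 2 / (B + 1))) _.
    by apply: Rmult_le_compat; lra.
  by right; field; lra.
have Hbound r : s0 <= r <= s0 + k -> u r <= u s0 + th / 2.
  move=> Hr0; have /Rabs_le_between := HL s0 r (ltac:(lra)) (ltac:(lra)).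
  rewrite (Rabs_pos_eq (r - s0)); last lra.
  have : B * (r - s0) <= B * k by apply: Rmult_le_compat_l; lra.
  lra.
have Hm : 0 < u s0 + th / 2 by lra.
have := Hosg s0 (s0 + k) _ (proj1 Hs0) (ltac:(lra)) (ltac:(lra)) Hm Hbound.
have := Hnear (u s0 + th / 2); rewrite (_ : u s0 + th / 2 - u s0 = th / 2); last ring.
rewrite Rabs_pos_eq; last lra.
move=> /(_ (ltac:(lra))) Hrho; rewrite (_ : s0 + k - s0 = k); last ring.
have : D * k * (rho (u s0 + th / 2) + del) <= D * k * (2 * rho (u s0) + del).
  by apply: Rmult_le_compat_l; nra.
nra.
Qed.

Lemma inv_rho_divergent M v : 0 < v ->
  exists al, 0 < al < v /\ M <= RInt (fun w => / rho w) al v.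
Proof.
move=> Hv; have exI p q : 0 < p -> 0 < q -> ex_RInt (fun w => / rho w) p q.
  by move=> Hp Hq; rewrite inv_rho_shift0; apply: ex_RInt_inv_rho; lra.
case: HU => _ [_ [_ [_ /(_ (M + RInt (fun w => / rho w) v 1))]]] [d1 [Hd1 H]].
pose al := Rmin d1 (v / 2).
have Hal : 0 < al by apply: Rmin_pos; lra.
have := Rmin_l d1 (v / 2); have := Rmin_r d1 (v / 2); rewrite -/al => Hal2 Hal1.
exists al; split; first lra.
have := H al (conj Hal Hal1); rewrite RI_RInt; last by apply: exI; lra.
rewrite -(RInt_Chasles_R (a := al) (b := v)); try (apply: exI; lra); lra.
Qed.

Variables (al del : R).
Hypotheses (Hal : 0 < al) (Hdel : 0 <= del).

Definition potential v := RInt (fun w => / (rho w + del)) al v.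

Lemma inv_rho_pos v : al <= v -> 0 < / (rho v + del).
Proof.
move=> Hv; have Hv0 : 0 < v by lra.
by apply: Rinv_0_lt_compat; have := rho_pos Hv0; lra.
Qed.

Lemma inv_rho_anti v w : al <= v -> v <= w -> / (rho w + del) <= / (rho v + del).
Proof.
move=> Hv Hw; have Hv0 : 0 < v by lra.
have := rho_pos Hv0; have := rho_mono Hv0 Hw.
by move=> *; apply: Rinv_le_contravar; lra.
Qed.

Lemma potential_sub v w : al <= v -> al <= w ->
  potential w - potential v = RInt (fun x => / (rho x + del)) v w.
Proof.
move=> Hv Hw; rewrite /potential -(RInt_Chasles_R (b := v)); try lra;
  by apply: ex_RInt_inv_rho; lra.
Qed.

Lemma potential_lipschitz v w : al <= v -> al <= w ->
  Rabs (potential w - potential v) <= / rho al * Rabs (w - v).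
Proof.
wlog Hle : v w / v <= w => [W Hv Hw|Hv Hw].
  case: (Rle_dec v w) => Hc; first exact: W.
  rewrite Rabs_minus_sym (Rabs_minus_sym w); apply: W => //; lra.
rewrite potential_sub // (Rabs_pos_eq (w - v)); last lra.
rewrite Rmult_comm; apply: abs_RInt_le_const => //; first by apply: ex_RInt_inv_rho; lra.
move=> x Hx; rewrite Rabs_pos_eq; last by apply: Rlt_le; apply: inv_rho_pos; lra.
apply: Rle_trans (inv_rho_anti (Rle_refl al) (ltac:(lra) : al <= x)) _.
by apply: Rinv_le_contravar; [exact: rho_pos | lra].
Qed.

Lemma potential_increment v w : al <= v -> al <= w ->
  potential w - potential v <= Rmax 0 (w - v) * / (rho v + del).
Proof.
move=> Hv Hw; have := inv_rho_pos Hv.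
case: (Rle_dec v w) => Hvw Hpos.
  rewrite Rmax_right ?potential_sub //; last lra.
  apply: RInt_le_const => //; first by apply: ex_RInt_inv_rho; lra.
  by move=> x Hx; apply: inv_rho_anti; lra.
have : (v - w) * 0 <= RInt (fun x => / (rho x + del)) w v.
  apply: RInt_ge_const; [lra | by apply: ex_RInt_inv_rho; lra |].
  by move=> x Hx; apply: Rlt_le; apply: inv_rho_pos; lra.
rewrite -potential_sub // Rmax_left; lra.
Qed.

(* Since del <= rho al <= rho v, F dominates half the integral of 1/rho. *)
Lemma potential_lower v : del <= rho al -> al <= v ->
  / 2 * RInt (fun w => / rho w) al v <= potential v.
Proof.
move=> Hdr Hv; rewrite -RInt_scal_R; last by rewrite inv_rho_shift0; apply: ex_RInt_inv_rho; lra.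
apply: RInt_le => //; first (apply: ex_RInt_scal; rewrite inv_rho_shift0).
- by apply: ex_RInt_inv_rho; lra.
- by apply: ex_RInt_inv_rho; lra.
move=> x Hx; have Hx0 : 0 < x by lra.
have := rho_pos Hx0; have := rho_mono Hal (ltac:(lra) : al <= x) => Hm Hr.
by rewrite -Rinv_mult; apply: Rinv_le_contravar; lra.
Qed.

Lemma potential_growth (u : R -> R) D B t sg s : 0 < D -> 0 <= B ->
  0 <= sg -> sg <= s -> s <= t -> lipschitz_on 0 t B u -> osgood_ineq rho D del t u ->
  (forall r, sg <= r <= s -> al <= u r) ->
  potential (u s) - potential (u sg) <= 2 * D * (s - sg).
Proof.
move=> HD HB Hsg Hsgs Hst HL Hosg Hge.
have Hinv : 0 < / rho al by apply: Rinv_0_lt_compat; exact: rho_pos.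
apply: (@increment_bound_of_local (fun r => potential (u r)) sg s (2 * D) (/ rho al * B))
  => // [|p q Hp Hq|s0 Hs0]; first by apply: Rmult_le_pos; lra.
  apply: Rle_trans (potential_lipschitz (Hge p Hp) (Hge q Hq)) _.
  by rewrite Rmult_assoc; apply: Rmult_le_compat_l; [lra | apply: HL; lra].
have Hv0 : al <= u s0 by apply: Hge; lra.
have Hu0 : 0 < u s0 by lra.
have Hr := rho_pos Hu0.
have Hs0' : 0 <= s0 < s by lra.
have [k0 [Hk0 Hinc]] := osgood_local_increment HD Hdel HB HL Hosg Hs0' Hst Hu0.
exists k0; split=> // k Hk Hks.
have Hvk : al <= u (s0 + k) by apply: Hge; lra.
apply: Rle_trans (potential_increment Hv0 Hvk) _.
have -> : 2 * D * k = 2 * D * k * (rho (u s0) + del) * / (rho (u s0) + del).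
  by field; lra.
apply: Rmult_le_compat_r; first exact: Rlt_le (inv_rho_pos Hv0).
apply: Rmax_lub; [apply: Rmult_le_pos; nra | exact: Hinc].
Qed.

End Osgood.

(* Otherwise, after its last exit from [0, al], the potential F o u would
   climb from 0 above int_al^eta 1/(2 rho) >= 2 D t + 1/2 at rate <= 2 D. *)
Lemma osgood_bihari rho D t : class_U rho -> 0 < D -> 0 <= t ->
  forall eta, 0 < eta -> exists d0, 0 < d0 /\
  forall (u : R -> R) B del, 0 <= del <= d0 -> 0 <= B -> u 0 = 0 ->
    lipschitz_on 0 t B u -> osgood_ineq rho D del t u ->
    forall s, 0 <= s <= t -> u s < eta.
Proof.
move=> HU HD Ht eta Heta.
case: (inv_rho_divergent HU (4 * D * t + 1) Heta) => al [[Hal Haleta] Hint].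
exists (rho al); split=> [|u B del [Hdel0 Hdel] HB Hu0 HL Hosg s Hs]; first exact: rho_pos.
apply: Rnot_le_lt => Hus.
have HLs : lipschitz_on 0 s B u by move=> p q Hp Hq; apply: HL; lra.
case: (last_exit HB HLs (proj1 Hs) (ltac:(lra) : u 0 <= al) (ltac:(lra) : al < u s))
  => sg [Hsg [Husg Habove]].
have Hge r : sg <= r <= s -> al <= u r.
  by move=> Hr; case: (Req_dec r sg) => [-> | Hne]; [lra | apply: Rlt_le; apply: Habove; lra].
have Hsgs : sg <= s by lra.
have Hgrowth := potential_growth HU Hal Hdel0 HD HB (proj1 Hsg) Hsgs (proj2 Hs) HL Hosg Hge.
have Hstart : potential rho al del (u sg) = 0 by rewrite Husg /potential RInt_point.
have Haleta' : al <= eta by lra.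
have Hend := potential_increment HU Hal Hdel0 (Hge s (conj Hsgs (Rle_refl s))) Haleta'.
rewrite Rmax_left in Hend; last lra.
have Hlow := potential_lower HU Hal Hdel0 Hdel Haleta'.
have : s - sg <= t by lra.
nra.
Qed.

Lemma solves_RInt d (b : pt d -> pt d) x0 w ell X : solves b x0 w ell X ->
  forall s, 0 <= s -> forall j, ex_RInt (fun r => b (X r) j) 0 s /\
    X s j = x0 j + RInt (fun r => b (X r) j) 0 s + w j (ell j s).
Proof.
move=> H s Hs j; case: (H s Hs j) => pr E; split; first exact: ex_RInt_Reals_1 pr.
by rewrite (RInt_Reals _ _ _ pr).
Qed.

(* The time-changed noise w j (ell j s) is bounded for s in [0, t]: ell j
   maps [0, t] into [0, ell j t], on which w j is continuous. *)
Lemma noise_bounded d (w ell : 'I_d -> R -> R) t j : in_Sd ell -> bm_path w -> 0 <= t ->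
  exists M, forall s, 0 <= s <= t -> Rabs (w j (ell j s)) <= M.
Proof.
move=> Hell Hw Ht; case: (Hell j) => [Hl0 [Hlm _]]; case: (Hw j) => _ Hwc.
have Hlt s : 0 <= s <= t -> 0 <= ell j s <= ell j t.
  by move=> Hs; split; [rewrite -Hl0; apply: Hlm | apply: Hlm]; lra.
pose g v := Rabs (w j (Rmax 0 v)).
case: (continuity_ab_maj g 0 (ell j t) (proj1 (Hlt t (conj Ht (Rle_refl t))))).
  move=> c Hc; apply/continuity_pt_filterlim.
  apply: (continuous_comp (fun v => w j (Rmax 0 v)) Rabs); last exact: continuous_Rabs.
  apply: continuous_of_eps_delta => e He.
  case: (Hwc c (proj1 Hc) e He) => del [Hdel Hd]; exists del; split=> // v Hv.
  rewrite (Rmax_right 0 c); last lra.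
  apply: Hd; first exact: Rmax_l.
  apply: Rle_lt_trans Hv; rewrite /Rmax; case: Rle_dec => Hb; first lra.
  by rewrite Rminus_0_l Rabs_Ropp Rabs_pos_eq ?Rabs_left1; lra.
move=> Mx [HMx _]; exists (g Mx) => s Hs.
by have := HMx _ (Hlt s Hs); rewrite /g (Rmax_right 0 (ell j s)) //; case: (Hlt s Hs).
Qed.

(* A solution is bounded on [0, t]: its drift integral is bounded since a
   Riemann integrable function is bounded, and so is the noise term. *)
Lemma solution_coord_bounded d (b : pt d -> pt d) x0 w ell X t j :
  in_Sd ell -> bm_path w -> solves b x0 w ell X -> 0 <= t ->
  exists M, forall s, 0 <= s <= t -> Rabs (X s j) <= M.
Proof.
move=> Hell Hw HX Ht.
case: (solves_RInt HX Ht j) => Et _; case: (ex_RInt_ub _ 0 t Et) => Bj HBj.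
case: (noise_bounded j Hell Hw Ht) => Mw HMw.
exists (Rabs (x0 j) + t * Bj + Mw) => s Hs.
case: (solves_RInt HX (proj1 Hs) j) => Es ->.
have I1 : Rabs (RInt (fun r => b (X r) j) 0 s) <= t * Bj.
  apply: Rle_trans (abs_RInt_le_const _ 0 s Bj (proj1 Hs) Es _) _.
    by move=> r Hr; apply: HBj; rewrite Rmin_left ?Rmax_right; lra.
  have Bj0 : 0 <= Bj.
    by apply: Rle_trans (HBj 0 _); [exact: Rabs_pos | rewrite Rmin_left ?Rmax_right; lra].
  rewrite Rminus_0_r; apply: Rmult_le_compat_r; lra.
have := HMw s Hs.
have := Rabs_triang (x0 j + RInt (fun r => b (X r) j) 0 s) (w j (ell j s)).
have := Rabs_triang (x0 j) (RInt (fun r => b (X r) j) 0 s); lra.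
Qed.

Lemma solution_bounded d (b : pt d -> pt d) x0 w ell X t : in_Sd ell -> bm_path w ->
  solves b x0 w ell X -> 0 <= t -> exists M, forall s, 0 <= s <= t -> norm1 (X s) <= M.
Proof.
move=> Hell Hw HX Ht.
have [M HM] := choice_bound (P := fun j M => forall s, 0 <= s <= t -> Rabs (X s j) <= M)
  (fun j M M' HM H1 s Hs => Rle_trans _ _ _ (H1 s Hs) HM)
  (fun j => solution_coord_bounded j Hell Hw HX Ht).
by exists (INR d * M) => s Hs; apply: norm1_bound => j; exact: HM.
Qed.

Section TwoSolutions.
Variables (d : nat) (rho : R -> R) (b1 b2 : pt d -> pt d) (x0 : pt d).
Variables (w ell : 'I_d -> R -> R) (X1 X2 : R -> pt d) (t del : R).
Hypotheses (HU : class_U rho) (Ht : 0 <= t) (Hdel : 0 <= del).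
Hypotheses (HX1 : solves b1 x0 w ell X1) (HX2 : solves b2 x0 w ell X2).
Hypothesis Hone : forall x y j,
  (x j - y j) * (b1 x j - b1 y j) <= Rabs (x j - y j) * rho (norm1 (vsub x y)).
Hypothesis Hclose : forall r j, 0 <= r <= t -> Rabs (b1 (X2 r) j - b2 (X2 r) j) <= del.

Let Z j r := X1 r j - X2 r j.
Let g j r := b1 (X1 r) j - b2 (X2 r) j.
Let u r := norm1 (vsub (X1 r) (X2 r)).

(* The noise cancels: Z j is a primitive of g j. *)
Lemma difference_primitive j p q : 0 <= p -> p <= q ->
  ex_RInt (g j) p q /\ Z j q - Z j p = RInt (g j) p q.
Proof.
move=> Hp Hpq; have Hq : 0 <= q by lra.
case: (solves_RInt HX1 Hq j) => Eq1 Xq1; case: (solves_RInt HX2 Hq j) => Eq2 Xq2.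
case: (solves_RInt HX1 Hp j) => Ep1 Xp1; case: (solves_RInt HX2 Hp j) => Ep2 Xp2.
have G1 := ex_RInt_Chasles_2 _ 0 p q (conj Hp Hpq) Eq1.
have G2 := ex_RInt_Chasles_2 _ 0 p q (conj Hp Hpq) Eq2.
split; first exact: ex_RInt_minus.
rewrite /g -RInt_minus_R // /Z Xq1 Xq2 Xp1 Xp2.
have := RInt_Chasles_R Ep1 G1; have := RInt_Chasles_R Ep2 G2; lra.
Qed.

Lemma difference_coord_lipschitz j : exists B, lipschitz_on 0 t B (Z j).
Proof.
case: (difference_primitive j (Rle_refl 0) Ht) => Ex _.
case: (ex_RInt_ub _ 0 t Ex) => B HB; exists B => p q Hp Hq.
wlog Hpq : p q Hp Hq / p <= q => [W|].
  case: (Rle_dec p q) => Hc; first exact: W.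
  rewrite Rabs_minus_sym (Rabs_minus_sym q); apply: W => //; lra.
case: (difference_primitive j (proj1 Hp) Hpq) => Ex2 ->.
rewrite (Rabs_pos_eq (q - p)); last lra.
rewrite Rmult_comm; apply: abs_RInt_le_const => // r Hr.
by apply: HB; rewrite Rmin_left ?Rmax_right; lra.
Qed.

Lemma difference_lipschitz : exists B, 0 <= B /\ forall j, lipschitz_on 0 t B (Z j).
Proof.
have [B HB] := choice_bound (P := fun j B => lipschitz_on 0 t B (Z j))
  (fun j B B' => @lipschitz_on_mono 0 t B B' (Z j)) difference_coord_lipschitz.
exists (Rmax 0 B); split=> [|j]; first exact: Rmax_l.
exact: lipschitz_on_mono (Rmax_r 0 B) (HB j).
Qed.

Lemma distance_lipschitz : exists B, 0 <= B /\ lipschitz_on 0 t B u.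
Proof.
case: difference_lipschitz => B [HB HL]; exists (INR d * B); split.
  by apply: Rmult_le_pos => //; exact: pos_INR.
move=> p q Hp Hq; apply: Rle_trans (norm1_reverse_tri _ _) _.
by rewrite Rmult_assoc; apply: norm1_bound => j; exact: (HL j p q Hp Hq).
Qed.

Lemma distance_start : u 0 = 0.
Proof.
rewrite /u -[RHS](norm1_zero d); apply: norm1_ext => j; rewrite /vsub.
case: (solves_RInt HX1 (Rle_refl 0) j) => _ ->; case: (solves_RInt HX2 (Rle_refl 0) j) => _ ->.
by rewrite !RInt_point /zero /=; ring.
Qed.

Lemma drift_difference_bound j r m : 0 <= r <= t -> u r <= m ->
  (0 < Z j r -> g j r <= rho m + del) /\ (Z j r < 0 -> - g j r <= rho m + del).
Proof.
move=> Hr Hum.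
have Hzu : Rabs (Z j r) <= u r := coord_le_norm1 (vsub (X1 r) (X2 r)) j.
have /Rabs_le_between Hcl := Hclose j Hr.
have Hone' := Hone (X1 r) (X2 r) j; rewrite -/(Z j r) -/(u r) in Hone'.
have Hmono : 0 < Rabs (Z j r) -> rho (u r) <= rho m.
  by move=> Hz; apply: rho_mono => //; lra.
split=> Hz.
- rewrite Rabs_pos_eq in Hone' Hzu Hmono; last lra.
  have : b1 (X1 r) j - b1 (X2 r) j <= rho (u r) by apply: (Rmult_le_reg_l (Z j r)).
  have := Hmono Hz; rewrite /g; lra.
- rewrite Rabs_left in Hone' Hzu Hmono; last lra.
  have : - (b1 (X1 r) j - b1 (X2 r) j) <= rho (u r).
    apply: (Rmult_le_reg_l (- Z j r)); first lra.
    by rewrite -Ropp_mult_distr_r Ropp_mult_distr_l Ropp_involutive.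
  have := Hmono (ltac:(lra)); rewrite /g; lra.
Qed.

(* u satisfies the Osgood inequality with D = d + 1 and defect del: each
   |Z j| grows at rate at most rho m + del (abs_growth), and u sums them. *)
Lemma distance_osgood : osgood_ineq rho (INR d + 1) del t u.
Proof.
move=> a c m Ha Hac Hct Hm Hum.
case: difference_lipschitz => B [HB HL].
have HK : 0 <= rho m + del by have := rho_pos HU Hm; lra.
have Sj j : Rabs (Z j c) - Rabs (Z j a) <= (c - a) * (rho m + del).
  apply: (abs_growth (B := B)) => //.
  - by move=> p q Hp Hpq Hq; apply: difference_primitive; lra.
  - by move=> p q Hp Hq; apply: HL; lra.
  - by move=> r Hr; apply: (proj1 (drift_difference_bound j _ _)); [lra | apply: Hum].
  - by move=> r Hr; apply: (proj2 (drift_difference_bound j _ _)); [lra | apply: Hum].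
have : u c <= u a + INR d * ((c - a) * (rho m + del)).
  rewrite /u /norm1 -big_Rconst -big_split /=; apply: big_Rle => j.
  have := Sj j; rewrite /Z /vsub; lra.
have : 0 <= (c - a) * (rho m + del) by apply: Rmult_le_pos; lra.
nra.
Qed.
End TwoSolutions.

(* For part 2, X is bounded on [0, t] by
   some MX; Osgood-Bihari gives a tolerance d0 for eta; uniform convergence
   of b_eps on {||x||_1 <= MX} gives del such that b_eps is d0-close to b
   along X for eps < del; the comparison of the two solutions then yields
   ||X^eps t - X t||_1 < eta. *)
Theorem lemma2p5 (d : nat) (rho : R -> R) (b : pt d -> pt d)
    (ell : 'I_d -> R -> R) (phi : pt d -> R) (w : 'I_d -> R -> R) (x0 : pt d) :
  class_U rho -> Cb rho b -> in_Sd ell -> mollifier phi -> bm_path w ->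
  (forall eps, 0 < eps < 1 -> Cb rho (b_eps phi b eps)) /\
  (forall (Xe : R -> R -> pt d) (X : R -> pt d),
     (forall eps, 0 < eps < 1 -> solves (b_eps phi b eps) x0 w ell (Xe eps)) ->
     solves b x0 w ell X ->
     forall t, 0 <= t ->
       forall eta, 0 < eta -> exists del, 0 < del /\
         forall eps, 0 < eps < del -> eps < 1 ->
           norm2 (vsub (Xe eps t) (X t)) < eta).
Proof.
move=> HU HCb Hell Hphi Hw; split=> [eps Heps|Xe X HXe HX t Ht eta Heta].
  exact: b_eps_Cb.
case: (solution_bounded Hell Hw HX Ht) => MX HMX.
have HD : 0 < INR d + 1 by have := pos_INR d; lra.
case: (osgood_bihari HU HD Ht Heta) => d0 [Hd0 Hbihari].
case: (b_eps_uniform_conv HCb Hphi MX Hd0) => del [Hdel Hconv].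
exists del; split=> // eps Heps Heps1; have Heps' : 0 < eps < 1 by lra.
have Hone := b_eps_one_sided HCb Hphi Heps'.
have Hclose r j : 0 <= r <= t -> Rabs (b_eps phi b eps (X r) j - b (X r) j) <= d0.
  by move=> Hr; apply: Hconv => //; exact: HMX.
case: (distance_lipschitz Ht (HXe eps Heps') HX) => B [HB HL].
apply: Rle_lt_trans (norm2_le_norm1 _) _.
apply: (Hbihari (fun r => norm1 (vsub (Xe eps r) (X r))) B d0) => //; first lra.
- exact: distance_start (HXe eps Heps') HX.
- exact: distance_osgood HU Ht (Rlt_le _ _ Hd0) (HXe eps Heps') HX Hone Hclose.
- lra.
Qed.
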